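(* Let $r>0$ and let $G$ be a hyperbolic uniform disk graph with radius $r$. Let $p\in\mathbb{H}^2$, let $\varphi\in(0,\pi/2]$, and let $m$ be a line through $p$ such that for every vertex $v$ of $G$ (disk center, assumed distinct from $p$) the line through $p$ and $v$ makes an angle of at least $\varphi$ with $m$. Then the subgraph of $G$ induced by the vertices at hyperbolic distance at most $r$ from $m$ can be covered with $\mathcal{O}\big(\log\frac{1}{\varphi}\cdot\big(1+\frac{1}{r}\big)\big)$ cliques.
   Context: $\mathbb{H}^2$ denotes the hyperbolic plane of Gaussian curvature $-1$. A hyperbolic uniform disk graph with radius $r$ is the intersection graph of a finite family of closed hyperbolic disks of radius $r$ in $\mathbb{H}^2$: vertices are the disks (identified with their centers), and two vertices are adjacent iff their centers have hyperbolic distance at most $2r$. The $\mathcal{O}$-bound has an absolute implied constant (independent of $G$, $r$, $p$, $m$) and is understood asymptotically as $\varphi\to 0$. *)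

From Stdlib Require Import Reals Lra List.
Open Scope R_scope.

(* Vectors of R^{2,1}; the third coordinate is the time-like one. *)
Definition V3 := (R * R * R)%type.

Definition vadd (a b : V3) : V3 :=
  let '(a1, a2, a3) := a in let '(b1, b2, b3) := b in (a1 + b1, a2 + b2, a3 + b3).
Definition vscale (c : R) (a : V3) : V3 :=
  let '(a1, a2, a3) := a in (c * a1, c * a2, c * a3).

Definition mink (a b : V3) : R :=
  let '(a1, a2, a3) := a in let '(b1, b2, b3) := b in a1 * b1 + a2 * b2 - a3 * b3.

(* The hyperbolic plane (curvature -1): upper sheet of <x,x> = -1. *)
Definition in_H2 (x : V3) : Prop :=
  mink x x = -1 /\ 0 < snd x.

Definition acosh (t : R) : R := ln (t + sqrt (t * t - 1)).

Definition hdist (x y : V3) : R := acosh (- mink x y).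

Definition adj (r : R) (x y : V3) : Prop := hdist x y <= 2 * r.

Definition tangent_at (p u : V3) : Prop := mink p u = 0 /\ u <> (0, 0, 0).

Definition line_pt (p u : V3) (t : R) : V3 :=
  vadd (vscale (cosh t) p) (vscale (sinh t / sqrt (mink u u)) u).
Definition on_line (p u x : V3) : Prop := exists t : R, x = line_pt p u t.

(* x is at hyperbolic distance at most r from the line m (m is closed, so the
   infimum distance is attained). *)
Definition near_line (p u : V3) (r : R) (x : V3) : Prop :=
  exists q, on_line p u q /\ hdist x q <= r.

(* Initial tangent vector at p of the geodesic from p to v. *)
Definition dir (p v : V3) : V3 := vadd v (vscale (mink v p) p).

(* Angle in [0, pi] between two tangent vectors (Riemannian metric = mink). *)
Definition vec_angle (a b : V3) : R :=
  acos (mink a b / (sqrt (mink a a) * sqrt (mink b b))).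

Definition line_angle (a b : V3) : R :=
  Rmin (vec_angle a b) (PI - vec_angle a b).

Definition clique_coverable (r : R) (V : list V3) (S : V3 -> Prop) (k : nat) : Prop :=
  exists Cl : nat -> V3 -> Prop,
    (forall i x, Cl i x -> In x V /\ S x) /\
    (forall i x y, Cl i x -> Cl i y -> x <> y -> adj r x y) /\
    (forall x, In x V -> S x -> exists i, (i < k)%nat /\ Cl i x).

From Stdlib Require Import Reals Lra Lia Psatz List ZArith.
Open Scope R_scope.

(* Use Fermi coordinates along m: a point at signed distance d from m whose
   foot lies at arc length s from p has Lorentz coordinates
   (cosh d cosh s, cosh d sinh s, sinh d) in the frame (p, u/|u|, n).
   Vertices within r of m have |sinh d| <= sinh r, and the angle condition
   gives |sinh s| <= 1 / sin phi, so e^s ranges over [1/M, M] with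
   M = 1 + 2 / sin phi.  Cutting this range into windows of ratio
   rho = 1 + r/(1+r) and separating the two sides of m yields
   2 ceil(2 ln M / ln rho) = O(log(1/phi) (1 + 1/r)) classes, and two vertices
   of one class satisfy cosh(dist) <= 1 + 2 sinh^2 r = cosh(2r), so every class
   is a clique. *)

Lemma ln_le_ln x y : 0 < x -> x <= y -> ln x <= ln y.
Proof.
  intros Hx [Hxy | ->]; [left; apply ln_increasing |]; lra.
Qed.

Lemma ln_one_plus_ge h : 0 <= h -> h / (1 + h) <= ln (1 + h).
Proof.
  intros Hh.
  assert (Hexp : exp (h / (1 + h)) <= 1 + h).
  { pose proof (exp_ineq1_le (- (h / (1 + h)))) as E.
    rewrite exp_Ropp in E.
    pose proof (exp_pos (h / (1 + h))).
    replace (1 + - (h / (1 + h))) with (/ (1 + h)) in E by (field; lra).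
    apply Rinv_le_contravar in E; [| apply Rinv_0_lt_compat; lra].
    rewrite !Rinv_inv in E; exact E. }
  rewrite <- (ln_exp (h / (1 + h))).
  apply ln_le_ln; [apply exp_pos | exact Hexp].
Qed.

Lemma half_le_sin x : 0 <= x <= 1 -> x / 2 <= sin x.
Proof.
  intros Hx.
  assert (Hpi : 3 < PI) by (pose proof PI2_3_2; lra).
  destruct (SIN x) as [Hlb _]; try lra.
  replace (sin_lb x) with (x - x^3/6 + x^5/120 - x^7/5040) in Hlb
    by (unfold sin_lb, sin_approx, sin_term; simpl; field).
  assert (Hxx : 0 <= x * x <= 1) by nra.
  assert (x^3 <= x) by (replace (x^3) with (x * (x * x)) by ring; nra).
  assert (0 <= x^5) by (apply pow_le; lra).
  assert (x^7 <= x^5) by (replace (x^7) with (x^5 * (x * x)) by ring; nra).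
  lra.
Qed.

Lemma exists_nat_ceil x : 0 <= x -> exists K : nat, x < INR K <= x + 1.
Proof.
  intros Hx. destruct (archimed x) as [Hup1 Hup2].
  assert (Hpos : (0 <= up x)%Z) by (apply le_IZR; lra).
  exists (Z.to_nat (up x)).
  rewrite INR_IZR_INZ, Z2Nat.id by exact Hpos. lra.
Qed.

Lemma exists_pow_gt rho y : 1 < rho -> 1 <= y ->
  exists K : nat, y < rho ^ K /\ INR K <= ln y / ln rho + 1.
Proof.
  intros Hrho Hy.
  assert (Hlrho : 0 < ln rho) by (rewrite <- ln_1; apply ln_increasing; lra).
  assert (Hly : 0 <= ln y) by (rewrite <- ln_1; apply ln_le_ln; lra).
  destruct (exists_nat_ceil (ln y / ln rho)) as [K [HK1 HK2]];
    [apply Rmult_le_pos; [| left; apply Rinv_0_lt_compat]; lra |].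
  exists K. split; [| lra].
  apply ln_lt_inv; [lra | apply pow_lt; lra |].
  rewrite ln_pow by lra.
  apply Rmult_lt_compat_r with (r := ln rho) in HK1; [| lra].
  replace (ln y / ln rho * ln rho) with (ln y) in HK1 by (field; lra). exact HK1.
Qed.

Lemma exists_pow_bucket (rho z : R) (K : nat) : 1 < rho -> 1 <= z -> z < rho ^ K ->
  exists j, (j < K)%nat /\ rho ^ j <= z < rho ^ S j.
Proof.
  intros Hrho Hz. induction K as [|K IH]; intros HK.
  - simpl in HK. lra.
  - destruct (Rlt_dec z (rho ^ K)) as [Hlt | Hge].
    + destruct (IH Hlt) as [j [Hj Hbucket]]. exists j; split; [lia | exact Hbucket].
    + exists K; split; [lia | lra].
Qed.

Lemma bucket_ratio rho M t t' (j : nat) : 0 <= rho -> 0 < M ->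
  rho ^ j <= M * t -> M * t' < rho ^ S j -> t' < rho * t.
Proof.
  intros Hrho HM Hlo Hhi. simpl in Hhi.
  apply Rmult_lt_reg_l with M; [exact HM |]. nra.
Qed.

Lemma cosh_sq_sub_sinh_sq t : cosh t * cosh t - sinh t * sinh t = 1.
Proof. unfold cosh, sinh. rewrite exp_Ropp. pose proof (exp_pos t). field. lra. Qed.

Lemma cosh_pos t : 0 < cosh t.
Proof. unfold cosh. pose proof (exp_pos t). pose proof (exp_pos (- t)). lra. Qed.

Lemma cosh_double r : cosh (2 * r) = 1 + 2 * (sinh r * sinh r).
Proof.
  unfold cosh, sinh. replace (2 * r) with (r + r) by ring.
  rewrite exp_plus, Ropp_plus_distr, exp_plus, exp_Ropp.
  pose proof (exp_pos r). field. lra.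
Qed.

Lemma ratio_le_sinh r : 0 <= r -> r / (1 + r) <= sinh r.
Proof.
  intros Hr. unfold sinh. rewrite exp_Ropp.
  pose proof (exp_ineq1_le r) as He.
  assert (Hinv : / exp r <= / (1 + r)) by (apply Rinv_le_contravar; lra).
  assert (r / (1 + r) <= ((1 + r) - / (1 + r)) / 2)
    by (apply Rmult_le_reg_r with (2 * (1 + r)); [lra |]; field_simplify; nra).
  lra.
Qed.

Lemma le_cosh_of_acosh_le y s : 1 <= y -> acosh y <= s -> y <= cosh s.
Proof.
  unfold acosh, cosh. intros Hy Hacosh.
  pose proof (sqrt_pos (y * y - 1)).
  pose proof (sqrt_sqrt (y * y - 1) ltac:(nra)).
  assert (Hexp : y + sqrt (y * y - 1) <= exp s).
  { rewrite <- (exp_ln (y + sqrt (y * y - 1))) by lra.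
    destruct Hacosh as [Hlt | ->]; [left; apply exp_increasing |]; lra. }
  rewrite exp_Ropp. pose proof (exp_pos s).
  apply Rmult_le_reg_r with (2 * exp s); [lra |].
  replace ((exp s + / exp s) / 2 * (2 * exp s)) with (exp s * exp s + 1) by (field; lra).
  nra.
Qed.

Lemma acosh_le_of_le_cosh y s : 1 <= y -> y <= cosh s -> 0 <= s -> acosh y <= s.
Proof.
  unfold acosh, cosh. intros Hy Hcosh Hs.
  rewrite exp_Ropp in Hcosh. pose proof (exp_pos s).
  assert (He1 : 1 <= exp s) by (pose proof (exp_ineq1_le s); lra).
  assert (Hy2 : 2 * exp s * y <= exp s * exp s + 1).
  { replace (exp s * exp s + 1) with ((exp s + / exp s) / 2 * (2 * exp s)) by (field; lra).
    apply Rmult_le_compat_l with (r := 2 * exp s) in Hcosh; lra. }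
  assert (Hye : y <= exp s) by nra.
  assert (Hsq : sqrt (y * y - 1) <= exp s - y).
  { rewrite <- (sqrt_square (exp s - y)) by lra. apply sqrt_le_1_alt. nra. }
  rewrite <- (ln_exp s). apply ln_le_ln; [pose proof (sqrt_pos (y * y - 1)) |]; lra.
Qed.

Lemma sq_le_cos_sq_of_line_angle phi z : 0 < phi -> phi <= PI / 2 -> -1 <= z <= 1 ->
  phi <= Rmin (acos z) (PI - acos z) -> z * z <= cos phi * cos phi.
Proof.
  intros Hphi Hphi2 Hz Hangle.
  pose proof (acos_bound z). pose proof PI_RGT_0.
  pose proof (Rle_trans _ _ _ Hangle (Rmin_l _ _)).
  pose proof (Rle_trans _ _ _ Hangle (Rmin_r _ _)).
  assert (Hup : cos (acos z) <= cos phi) by (apply cos_decr_1; lra).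
  assert (Hlo : cos (PI - phi) <= cos (acos z)) by (apply cos_decr_1; lra).
  rewrite Rtrigo_facts.cos_pi_minus in Hlo. rewrite cos_acos in Hup, Hlo by lra.
  assert (0 <= cos phi) by (apply cos_ge_0; lra).
  nra.
Qed.

Lemma sin_sq_le_of_line_angle b c s phi : 0 < s -> 0 < phi -> phi <= PI / 2 ->
  let z := b * s / (sqrt (b * b + c * c) * s) in
  phi <= Rmin (acos z) (PI - acos z) -> b * b * (sin phi * sin phi) <= c * c.
Proof.
  intros Hs Hphi Hphi2 z Hangle.
  pose proof (sin2_cos2 phi) as Hpyth. unfold Rsqr in Hpyth.
  destruct (Req_dec (b * b + c * c) 0) as [Hz | Hnz].
  - destruct (Rplus_sqr_eq_0 b c Hz) as [-> ->]. lra.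
  - assert (Hq : 0 < b * b + c * c)
      by (pose proof (Rle_0_sqr b); pose proof (Rle_0_sqr c); unfold Rsqr in *; lra).
    pose proof (sqrt_lt_R0 _ Hq). pose proof (sqrt_sqrt _ (Rlt_le _ _ Hq)) as Hsq2.
    assert (Hz2 : z * z * (b * b + c * c) = b * b)
      by (unfold z; rewrite <- Hsq2 at 3; field; lra).
    assert (Hz1 : z * z <= 1).
    { apply Rmult_le_reg_r with (b * b + c * c); [lra |].
      pose proof (Rle_0_sqr c). unfold Rsqr in *. lra. }
    pose proof (sq_le_cos_sq_of_line_angle phi z Hphi Hphi2 ltac:(split; nra) Hangle).
    assert (b * b <= cos phi * cos phi * (b * b + c * c))
      by (rewrite <- Hz2 at 1; apply Rmult_le_compat_r; lra).
    assert (0 <= c * c * (cos phi * cos phi)) by nra.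
    nra.
Qed.

Definition hyperboloid (a b c : R) : Prop := a * a - b * b - c * c = 1 /\ 0 < a.

(* For (a, b, c) = (cosh d cosh s, cosh d sinh s, sinh d), foot_exp a b c = e^s. *)
Definition foot_exp (a b c : R) : R := (a + b) / sqrt (1 + c * c).

Lemma hyperboloid_inner_ge a b c a' b' c' :
  hyperboloid a b c -> hyperboloid a' b' c' -> 1 <= a * a' - b * b' - c * c'.
Proof.
  intros [H Ha] [H' Ha'].
  assert ((b * b' + c * c') * (b * b' + c * c') <= (a * a - 1) * (a' * a' - 1))
    by (pose proof (pow2_ge_0 (b * c' - c * b')); nra).
  assert (1 <= a) by nra. assert (1 <= a') by nra.
  assert ((a * a - 1) * (a' * a' - 1) <= (a * a' - 1) * (a * a' - 1))
    by (pose proof (pow2_ge_0 (a - a')); nra).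
  assert (0 <= a * a' - 1) by nra.
  destruct (Rle_dec (b * b' + c * c') (a * a' - 1)); [lra | nra].
Qed.

Lemma hyperboloid_foot_exp a b c : hyperboloid a b c ->
  0 < foot_exp a b c /\
  a + b = sqrt (1 + c * c) * foot_exp a b c /\
  a - b = sqrt (1 + c * c) / foot_exp a b c.
Proof.
  intros [H Ha]. unfold foot_exp.
  pose proof (sqrt_lt_R0 (1 + c * c) ltac:(nra)).
  pose proof (sqrt_sqrt (1 + c * c) ltac:(nra)).
  assert (0 < a + b) by nra. assert (0 < a - b) by nra.
  split; [apply Rdiv_lt_0_compat; lra |].
  split; [field; lra |].
  apply Rmult_eq_reg_l with (a + b); [| lra].
  field_simplify; [nra | lra ..].
Qed.

Lemma foot_exp_bounds a b c d : hyperboloid a b c -> 0 < d -> b * b * (d * d) <= c * c ->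
  1 <= (1 + 2 / d) * foot_exp a b c <= (1 + 2 / d) * (1 + 2 / d).
Proof.
  intros Hh Hd Hbc.
  destruct (hyperboloid_foot_exp a b c Hh) as [Ht [Hplus Hminus]].
  destruct Hh as [H Ha].
  set (C := sqrt (1 + c * c)) in *. set (t := foot_exp a b c) in *. set (M := 1 + 2 / d).
  assert (HC : 0 < C) by (apply sqrt_lt_R0; nra).
  assert (HC2 : C * C = 1 + c * c) by (apply sqrt_sqrt; nra).
  assert (HCd : 0 < C / d) by (apply Rdiv_lt_0_compat; lra).
  assert (HMC : M * C = C + 2 * (C / d)) by (unfold M; field; lra).
  assert (Hb : - (C / d) <= b <= C / d).
  { assert (b * b <= (C / d) * (C / d))
      by (apply Rmult_le_reg_r with (d * d); [nra |]; field_simplify; lra).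
    split; nra. }
  assert (HaC : a <= C + C / d) by nra.
  assert (HM1 : 1 <= M) by (unfold M; assert (0 < 2 / d) by (apply Rdiv_lt_0_compat; lra); lra).
  assert (Htop : t <= M) by (apply Rmult_le_reg_l with C; [lra | nra]).
  assert (Hbot : 1 / t <= M).
  { apply Rmult_le_reg_l with C; [lra |].
    replace (C * (1 / t)) with (C / t) by (field; lra). nra. }
  split.
  - apply Rmult_le_reg_r with (1 / t); [apply Rdiv_lt_0_compat; lra |].
    replace (M * t * (1 / t)) with M by (field; lra). lra.
  - apply Rmult_le_compat_l; lra.
Qed.

Lemma ratio_add_inv_le t t' rho : 0 < t -> 0 < t' -> 1 < rho ->
  t < rho * t' -> t' < rho * t -> t / t' + t' / t <= 2 + (rho - 1) * (rho - 1).
Proof.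
  intros Ht Ht' Hrho H1 H2.
  assert (rho * (t * t + t' * t') <= (rho * rho + 1) * (t * t'))
    by (assert (0 <= (rho * t - t') * (rho * t' - t)) by (apply Rmult_le_pos; lra); nra).
  assert (Hpoly : t * t + t' * t' <= (2 + (rho - 1) * (rho - 1)) * (t * t')).
  { apply Rmult_le_reg_l with rho; [lra |].
    assert (0 <= (rho - 1) * (rho - 1) * (rho - 1) * (t * t')).
    { apply Rmult_le_pos; [| nra]. assert (0 <= (rho - 1) * (rho - 1)) by nra. nra. }
    nra. }
  replace (t / t' + t' / t) with ((t * t + t' * t') / (t * t')) by (field; lra).
  apply Rmult_le_reg_r with (t * t'); [nra |].
  field_simplify; lra.
Qed.

Lemma cosh_sub_le c c' s : 0 <= c * c' -> c * c <= s * s -> c' * c' <= s * s ->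
  sqrt (1 + c * c) * sqrt (1 + c' * c') - c * c' <= 1 + s * s / 2.
Proof.
  intros Hcc Hc Hc'.
  pose proof (sqrt_sqrt (1 + c * c) ltac:(nra)).
  pose proof (sqrt_sqrt (1 + c' * c') ltac:(nra)).
  assert (2 * (sqrt (1 + c * c) * sqrt (1 + c' * c')) <= 2 + c * c + c' * c')
    by (pose proof (pow2_ge_0 (sqrt (1 + c * c) - sqrt (1 + c' * c'))); nra).
  assert ((c - c') * (c - c') <= s * s).
  { destruct (Rle_dec (c * c) (c' * c')).
    - assert (c * c <= c * c') by (destruct (Rle_dec 0 c); nra). nra.
    - assert (c' * c' <= c * c') by (destruct (Rle_dec 0 c); nra). nra. }
  nra.
Qed.

Lemma hyperboloid_inner_le a b c a' b' c' s rho :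
  hyperboloid a b c -> hyperboloid a' b' c' ->
  0 <= c * c' -> c * c <= s * s -> c' * c' <= s * s ->
  1 < rho -> rho - 1 <= 1 -> rho - 1 <= s ->
  foot_exp a b c < rho * foot_exp a' b' c' -> foot_exp a' b' c' < rho * foot_exp a b c ->
  a * a' - b * b' - c * c' <= 1 + 2 * (s * s).
Proof.
  intros Hh Hh' Hcc Hc Hc' Hrho Hrho1 Hrhos Ht Ht'.
  destruct (hyperboloid_foot_exp a b c Hh) as [Hpos [Hplus Hminus]].
  destruct (hyperboloid_foot_exp a' b' c' Hh') as [Hpos' [Hplus' Hminus']].
  pose proof (cosh_sub_le c c' s Hcc Hc Hc') as Hsub.
  set (C := sqrt (1 + c * c)) in *. set (C' := sqrt (1 + c' * c')) in *.
  set (t := foot_exp a b c) in *. set (t' := foot_exp a' b' c') in *.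
  assert (HC : 0 < C) by (apply sqrt_lt_R0; nra).
  assert (HC' : 0 < C') by (apply sqrt_lt_R0; nra).
  (* a a' - b b' = cosh d cosh d' cosh (s - s') *)
  assert (Hinner : a * a' - b * b' = C * C' * (t / t' + t' / t) / 2).
  { replace (a * a' - b * b') with (((a + b) * (a' - b') + (a - b) * (a' + b')) / 2) by field.
    rewrite Hplus, Hminus, Hplus', Hminus'. field. lra. }
  pose proof (ratio_add_inv_le t t' rho Hpos Hpos' Hrho Ht Ht').
  assert (HCC : C * C' <= 1 + s * s).
  { assert (C * C = 1 + c * c) by (apply sqrt_sqrt; nra).
    assert (C' * C' = 1 + c' * c') by (apply sqrt_sqrt; nra).
    pose proof (pow2_ge_0 (C - C')). nra. }
  assert (Hextra : C * C' * ((rho - 1) * (rho - 1)) <= 2 * (s * s)).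
  { assert ((rho - 1) * (rho - 1) <= s * s) by nra.
    assert (0 <= (rho - 1) * (rho - 1)) by nra.
    apply Rle_trans with ((1 + s * s) * ((rho - 1) * (rho - 1)));
      [apply Rmult_le_compat_r; lra |].
    assert (0 <= s * s * (1 - (rho - 1) * (rho - 1))) by (apply Rmult_le_pos; nra).
    nra. }
  assert (a * a' - b * b' <= C * C' * (1 + (rho - 1) * (rho - 1) / 2)).
  { rewrite Hinner.
    replace (C * C' * (t / t' + t' / t) / 2) with (C * C' * ((t / t' + t' / t) / 2))
      by (unfold Rdiv; ring).
    apply Rmult_le_compat_l; nra. }
  nra.
Qed.

Definition det3 (a b c : V3) : R :=
  let '(a1, a2, a3) := a in let '(b1, b2, b3) := b in let '(c1, c2, c3) := c in
  a1 * (b2 * c3 - b3 * c2) - a2 * (b1 * c3 - b3 * c1) + a3 * (b1 * c2 - b2 * c1).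

(* The Gram identity for the Lorentz form, whose determinant is -1. *)
Lemma det3_mul_det3 (p u x y : V3) :
  det3 p u x * det3 p u y =
  - (mink p p * (mink u u * mink x y - mink x u * mink y u)
     - mink p u * (mink p u * mink x y - mink y u * mink x p)
     + mink y p * (mink p u * mink x u - mink u u * mink x p)).
Proof.
  destruct p as [[? ?] ?], u as [[? ?] ?], x as [[? ?] ?], y as [[? ?] ?]; simpl; ring.
Qed.

Lemma mink_vadd_vscale x a b (al be : R) :
  mink x (vadd (vscale al a) (vscale be b)) = al * mink x a + be * mink x b.
Proof. destruct x as [[? ?] ?], a as [[? ?] ?], b as [[? ?] ?]; simpl; ring. Qed.

Lemma mink_dir_l p x y : mink (dir p x) y = mink x y + mink x p * mink p y.
Proof. destruct p as [[? ?] ?], x as [[? ?] ?], y as [[? ?] ?]; simpl; ring. Qed.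

Lemma mink_dir_dir p x :
  mink (dir p x) (dir p x) = mink x x + mink x p * mink x p * (2 + mink p p).
Proof. destruct p as [[? ?] ?], x as [[? ?] ?]; simpl; ring. Qed.

Lemma mink_H2_neg x p : in_H2 x -> in_H2 p -> mink x p < 0.
Proof.
  destruct x as [[x1 x2] x3], p as [[p1 p2] p3]; unfold in_H2; simpl.
  intros [Hx Hx3] [Hp Hp3].
  assert ((x1 * p1 + x2 * p2) ^ 2 <= (x1 * x1 + x2 * x2) * (p1 * p1 + p2 * p2))
    by (pose proof (pow2_ge_0 (x1 * p2 - x2 * p1)); nra).
  assert ((x1 * p1 + x2 * p2) ^ 2 < (x3 * p3) ^ 2) by nra.
  assert (0 < x3 * p3) by nra.
  nra.
Qed.

Lemma tangent_spacelike p u : in_H2 p -> tangent_at p u -> 0 < mink u u.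
Proof.
  destruct p as [[p1 p2] p3], u as [[u1 u2] u3]; unfold in_H2, tangent_at; simpl.
  intros [Hp Hp3] [Hu Hne].
  assert (Horth : u3 * p3 = u1 * p1 + u2 * p2) by lra.
  destruct (Req_dec (u1 * u1 + u2 * u2) 0) as [Hz | Hnz].
  - exfalso. apply Hne.
    destruct (Rplus_sqr_eq_0 u1 u2 Hz) as [-> ->].
    assert (Hu3 : u3 * p3 = 0) by lra.
    apply Rmult_integral in Hu3 as [-> | Hp0]; [reflexivity | lra].
  - assert ((u1 * p1 + u2 * p2) ^ 2 <= (u1 * u1 + u2 * u2) * (p1 * p1 + p2 * p2))
      by (pose proof (pow2_ge_0 (u1 * p2 - u2 * p1)); nra).
    assert (0 < u1 * u1 + u2 * u2)
      by (pose proof (Rle_0_sqr u1); pose proof (Rle_0_sqr u2); unfold Rsqr in *; lra).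
    assert ((u3 * p3) ^ 2 < (u1 * u1 + u2 * u2) * (p3 * p3)).
    { rewrite Horth. replace (p3 * p3) with (p1 * p1 + p2 * p2 + 1) by lra. lra. }
    assert (u3 * u3 < u1 * u1 + u2 * u2) by (apply (Rmult_lt_reg_r (p3 * p3)); nra).
    lra.
Qed.

Lemma clique_coverable_intro r V S k (L : nat -> V3 -> Prop) :
  (forall x, In x V -> S x -> exists i, (i < k)%nat /\ L i x) ->
  (forall i x y, In x V -> S x -> In y V -> S y -> L i x -> L i y -> x <> y -> adj r x y) ->
  clique_coverable r V S k.
Proof.
  intros Hcover Hclique.
  exists (fun i x => In x V /\ S x /\ L i x). split; [| split].
  - intros i x (Hx & HSx & _). auto.
  - intros i x y (Hx & HSx & HLx) (Hy & HSy & HLy). eauto.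
  - intros x Hx HSx. destruct (Hcover x Hx HSx) as [i [Hi HLi]]. eauto.
Qed.

Section FermiCoordinates.

Variables p u : V3.
Hypothesis Hp : in_H2 p.
Hypothesis Hu : tangent_at p u.

(* Coordinates in the Lorentz-orthonormal frame (p, u/|u|, n), where n is the
   unit normal of the plane spanned by p and u: det3 p u x = <x, p ⊠ u> for the
   Lorentz cross product, and |p ⊠ u| = |u|. *)
Definition coord_p (x : V3) : R := - mink x p.
Definition coord_u (x : V3) : R := mink x u / sqrt (mink u u).
Definition coord_n (x : V3) : R := det3 p u x / sqrt (mink u u).

Lemma mink_coords x y :
  mink x y = - coord_p x * coord_p y + coord_u x * coord_u y + coord_n x * coord_n y.
Proof.
  pose proof (tangent_spacelike p u Hp Hu).
  assert (Hpp : mink p p = -1) by apply Hp.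
  assert (Hpu : mink p u = 0) by apply Hu.
  pose proof (det3_mul_det3 p u x y) as Hgram. rewrite Hpp, Hpu in Hgram.
  assert (Hs : sqrt (mink u u) * sqrt (mink u u) = mink u u) by (apply sqrt_sqrt; lra).
  assert (Hs0 : sqrt (mink u u) <> 0) by (apply Rgt_not_eq, sqrt_lt_R0; lra).
  unfold coord_p, coord_u, coord_n.
  replace (det3 p u x / sqrt (mink u u) * (det3 p u y / sqrt (mink u u)))
    with (det3 p u x * det3 p u y / (sqrt (mink u u) * sqrt (mink u u))) by (field; auto).
  replace (mink x u / sqrt (mink u u) * (mink y u / sqrt (mink u u)))
    with (mink x u * mink y u / (sqrt (mink u u) * sqrt (mink u u))) by (field; auto).
  rewrite Hs, Hgram. field. lra.
Qed.

Lemma coords_hyperboloid x : in_H2 x -> hyperboloid (coord_p x) (coord_u x) (coord_n x).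
Proof.
  intros Hx. split.
  - pose proof (mink_coords x x). destruct Hx as [Hxx _]. lra.
  - unfold coord_p. pose proof (mink_H2_neg x p Hx Hp). lra.
Qed.

Lemma one_le_neg_mink x y : in_H2 x -> in_H2 y -> 1 <= - mink x y.
Proof.
  intros Hx Hy. rewrite mink_coords.
  pose proof (hyperboloid_inner_ge _ _ _ _ _ _
                (coords_hyperboloid x Hx) (coords_hyperboloid y Hy)).
  lra.
Qed.

Lemma adj_of_mink r x y : in_H2 x -> in_H2 y -> 0 <= r ->
  - mink x y <= cosh (2 * r) -> adj r x y.
Proof.
  intros Hx Hy Hr Hxy. unfold adj, hdist.
  apply acosh_le_of_le_cosh; [apply one_le_neg_mink | |]; auto; lra.
Qed.

Lemma mink_line_pt x t : - mink x (line_pt p u t) = coord_p x * cosh t - coord_u x * sinh t.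
Proof.
  pose proof (tangent_spacelike p u Hp Hu).
  assert (0 < sqrt (mink u u)) by (apply sqrt_lt_R0; lra).
  unfold line_pt, coord_p, coord_u. rewrite mink_vadd_vscale. field. lra.
Qed.

Lemma near_line_coord_n r x : in_H2 x -> near_line p u r x ->
  coord_n x * coord_n x <= sinh r * sinh r.
Proof.
  intros Hx [q [[t ->] Hd]]. unfold hdist in Hd. rewrite mink_line_pt in Hd.
  destruct (coords_hyperboloid x Hx) as [Hh Ha].
  set (a := coord_p x) in *. set (b := coord_u x) in *. set (c := coord_n x) in *.
  pose proof (cosh_sq_sub_sinh_sq t) as Ht.
  assert (HY1 : 1 <= a * cosh t - b * sinh t).
  { assert (Hline : hyperboloid (cosh t) (sinh t) 0) by (split; [lra | apply cosh_pos]).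
    pose proof (hyperboloid_inner_ge _ _ _ _ _ _ (conj Hh Ha) Hline). lra. }
  pose proof (le_cosh_of_acosh_le _ _ HY1 Hd).
  assert ((a * cosh t - b * sinh t) ^ 2 = 1 + c * c + (a * sinh t - b * cosh t) ^ 2).
  { replace (1 + c * c) with ((a * a - b * b) * (cosh t * cosh t - sinh t * sinh t))
      by (rewrite Ht; lra).
    ring. }
  pose proof (cosh_sq_sub_sinh_sq r).
  pose proof (pow2_ge_0 (a * sinh t - b * cosh t)).
  nra.
Qed.

Lemma line_angle_coords phi x : in_H2 x -> 0 < phi -> phi <= PI / 2 ->
  phi <= line_angle (dir p x) u ->
  coord_u x * coord_u x * (sin phi * sin phi) <= coord_n x * coord_n x.
Proof.
  intros Hx Hphi Hphi2 Hangle.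
  pose proof (tangent_spacelike p u Hp Hu).
  assert (Hs : 0 < sqrt (mink u u)) by (apply sqrt_lt_R0; lra).
  assert (Hpp : mink p p = -1) by apply Hp.
  assert (Hpu : mink p u = 0) by apply Hu.
  assert (Hxx : mink x x = -1) by apply Hx.
  assert (Hdd : mink (dir p x) (dir p x) = coord_u x * coord_u x + coord_n x * coord_n x).
  { destruct (coords_hyperboloid x Hx) as [Hh _].
    rewrite mink_dir_dir, Hxx, Hpp. unfold coord_p in Hh. nra. }
  assert (Hdu : mink (dir p x) u = coord_u x * sqrt (mink u u)).
  { rewrite mink_dir_l, Hpu. unfold coord_u. field. lra. }
  unfold line_angle, vec_angle in Hangle. rewrite Hdd, Hdu in Hangle.
  exact (sin_sq_le_of_line_angle _ _ _ phi Hs Hphi Hphi2 Hangle).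
Qed.

Definition bucket (rho M : R) (i : nat) (x : V3) : Prop :=
  exists j : nat,
    ((i = 2 * j)%nat /\ 0 <= coord_n x \/ (i = 2 * j + 1)%nat /\ coord_n x <= 0) /\
    rho ^ j <= M * foot_exp (coord_p x) (coord_u x) (coord_n x) < rho ^ S j.

Lemma near_line_clique_coverable r d rho (K : nat) (V : list V3) :
  0 < r -> 0 < d -> 1 < rho -> rho - 1 <= 1 -> rho - 1 <= sinh r ->
  (1 + 2 / d) * (1 + 2 / d) < rho ^ K ->
  (forall v, In v V -> in_H2 v /\ coord_u v * coord_u v * (d * d) <= coord_n v * coord_n v) ->
  clique_coverable r V (near_line p u r) (2 * K).
Proof.
  intros Hr Hd Hrho Hrho1 Hrhos HK HV.
  set (M := 1 + 2 / d) in *.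
  assert (HM : 0 < M) by (unfold M; assert (0 < 2 / d) by (apply Rdiv_lt_0_compat; lra); lra).
  apply clique_coverable_intro with (L := bucket rho M).
  - intros x Hx _. destruct (HV x Hx) as [HxH Hxd].
    destruct (foot_exp_bounds _ _ _ d (coords_hyperboloid x HxH) Hd Hxd) as [Hlo Hhi].
    fold M in Hlo, Hhi.
    destruct (exists_pow_bucket rho _ K Hrho Hlo ltac:(lra)) as [j [Hj Hwin]].
    destruct (Rle_dec 0 (coord_n x)) as [Hc | Hc].
    + exists (2 * j)%nat. split; [lia |]. exists j. auto.
    + exists (2 * j + 1)%nat. split; [lia |]. exists j. split; [right; split |]; auto; lra.
  - intros i x y Hx Hnx Hy Hny [j [Hsx Hwx]] [j' [Hsy Hwy]] _.
    assert (Hsame : j = j' /\ 0 <= coord_n x * coord_n y).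
    { destruct Hsx as [[-> Hcx] | [-> Hcx]], Hsy as [[Hij Hcy] | [Hij Hcy]];
        (split; [lia |]); try (exfalso; lia); nra. }
    destruct Hsame as [<- Hcc].
    destruct (HV x Hx) as [HxH _], (HV y Hy) as [HyH _].
    apply adj_of_mink; auto; [lra |].
    rewrite mink_coords, cosh_double.
    enough (coord_p x * coord_p y - coord_u x * coord_u y - coord_n x * coord_n y
            <= 1 + 2 * (sinh r * sinh r)) by lra.
    apply hyperboloid_inner_le with rho; auto using coords_hyperboloid, near_line_coord_n;
      apply (bucket_ratio rho M _ _ j); lra.
Qed.

End FermiCoordinates.

Lemma one_le_ln_inv phi : 0 < phi -> phi <= 1 / 5 -> 1 <= ln (1 / phi).
Proof.
  intros Hphi Hphi5.
  apply Rle_trans with (ln (exp 1)); [rewrite ln_exp; lra |].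
  apply ln_le_ln; [apply exp_pos |].
  pose proof exp_le_3.
  assert (5 <= 1 / phi) by (apply Rmult_le_reg_r with phi; [lra |]; field_simplify; lra).
  lra.
Qed.

Lemma ln_sq_one_plus_two_div_sin_le phi : 0 < phi -> phi <= 1 / 5 ->
  ln ((1 + 2 / sin phi) * (1 + 2 / sin phi)) <= 4 * ln (1 / phi).
Proof.
  intros Hphi Hphi5.
  assert (phi / 2 <= sin phi) by (apply half_le_sin; lra).
  assert (HM : 1 <= 1 + 2 / sin phi <= 1 / (phi * phi)).
  { assert (2 / sin phi <= 4 / phi)
      by (apply Rmult_le_reg_r with (sin phi * phi); [nra |]; field_simplify; lra).
    assert (0 < 2 / sin phi) by (apply Rdiv_lt_0_compat; lra).
    assert (1 + 4 / phi <= 1 / (phi * phi))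
      by (apply Rmult_le_reg_r with (phi * phi); [nra |]; field_simplify; nra).
    lra. }
  replace (4 * ln (1 / phi)) with (ln (1 / (phi * phi)) + ln (1 / (phi * phi))).
  - rewrite ln_mult by lra. apply Rplus_le_compat; apply ln_le_ln; lra.
  - replace (1 / (phi * phi)) with (1 / phi * (1 / phi)) by (field; lra).
    rewrite ln_mult by (apply Rdiv_lt_0_compat; lra). ring.
Qed.

Lemma bucket_count r phi : 0 < r -> 0 < phi -> phi <= 1 / 5 ->
  exists K : nat,
    (1 + 2 / sin phi) * (1 + 2 / sin phi) < (1 + r / (1 + r)) ^ K /\
    INR (2 * K) <= 18 * ln (1 / phi) * (1 + 1 / r).
Proof.
  intros Hr Hphi Hphi5.
  pose proof (one_le_ln_inv phi Hphi Hphi5) as Hl1.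
  pose proof (ln_sq_one_plus_two_div_sin_le phi Hphi Hphi5) as HlM.
  set (m := r / (1 + r)) in *. set (M := 1 + 2 / sin phi) in *. set (l := ln (1 / phi)) in *.
  assert (Hm : 0 < m <= 1)
    by (unfold m; split; [apply Rdiv_lt_0_compat | apply Rmult_le_reg_r with (1 + r);
                          [| field_simplify]]; lra).
  assert (Hm1 : m * (1 + 1 / r) = 1) by (unfold m; field; lra).
  assert (HM : 1 <= M).
  { assert (phi / 2 <= sin phi) by (apply half_le_sin; lra).
    assert (0 < 2 / sin phi) by (apply Rdiv_lt_0_compat; lra). unfold M. lra. }
  assert (Hlrho : m / 2 <= ln (1 + m)).
  { apply Rle_trans with (m / (1 + m)); [| apply ln_one_plus_ge; lra].
    apply Rmult_le_reg_r with (2 * (1 + m)); [lra |]. field_simplify; nra. }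
  destruct (exists_pow_gt (1 + m) (M * M)) as [K [HK HKle]]; [lra | nra |].
  exists K. split; [exact HK |].
  assert (0 < 1 / r) by (apply Rdiv_lt_0_compat; lra).
  assert (ln (M * M) / ln (1 + m) <= 8 * l * (1 + 1 / r)).
  { apply Rmult_le_reg_r with (ln (1 + m)); [lra |].
    replace (ln (M * M) / ln (1 + m) * ln (1 + m)) with (ln (M * M)) by (field; lra).
    assert (8 * l * (1 + 1 / r) * (m / 2) = 4 * l)
      by (transitivity (4 * l * (m * (1 + 1 / r))); [field; lra | rewrite Hm1; ring]).
    assert (0 <= 8 * l * (1 + 1 / r)) by nra.
    nra. }
  assert (1 <= l * (1 + 1 / r)) by nra.
  rewrite mult_INR. simpl (INR 2). lra.
Qed.

Theorem corollary10 :
  exists C : R, 0 < C /\ exists phi0 : R, 0 < phi0 /\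
  forall (r phi : R) (p u : V3) (V : list V3),
    0 < r ->
    0 < phi -> phi <= PI / 2 -> phi <= phi0 ->
    in_H2 p -> tangent_at p u ->
    (forall v, In v V -> in_H2 v) ->
    (forall v, In v V -> v <> p /\ phi <= line_angle (dir p v) u) ->
    exists k : nat,
      clique_coverable r V (near_line p u r) k /\
      INR k <= C * ln (1 / phi) * (1 + 1 / r).
Proof.
  exists 18. split; [lra |]. exists (1 / 5). split; [lra |].
  intros r phi p u V Hr Hphi Hphi2 Hphi5 Hp Hu HV Hangle.
  destruct (bucket_count r phi Hr Hphi Hphi5) as [K [HK Hcount]].
  exists (2 * K)%nat. split; [| exact Hcount].
  assert (0 < r / (1 + r) <= 1)
    by (split; [apply Rdiv_lt_0_compat | apply Rmult_le_reg_r with (1 + r);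
                [| field_simplify]]; lra).
  assert (r / (1 + r) <= sinh r) by (apply ratio_le_sinh; lra).
  assert (phi / 2 <= sin phi) by (apply half_le_sin; lra).
  apply (near_line_clique_coverable p u Hp Hu r (sin phi) (1 + r / (1 + r))); try lra.
  intros v Hv. split; [auto |].
  apply (line_angle_coords p u Hp Hu); [auto | lra | lra | apply (proj2 (Hangle v Hv))].
Qed.
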